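(* Let $n\ge1$, $\mu>0$, let $B^1,\dots,B^n$ be independent standard Brownian motions and $G_{1,\mu}$ an independent Gamma process, and let $I^n_\mu(t)=(B^1(G_{1,\mu}(t)),\dots,B^n(G_{1,\mu}(t)))^T$. Its density $$q(\mathbf x,t)=\int_0^\infty\prod_{i=1}^n\frac{e^{-x_i^2/(2s)}}{\sqrt{2\pi s}}\,\frac{s^{\mu-1}e^{-s/t}}{t^\mu\Gamma(\mu)}\,ds,\qquad\mathbf x\in\mathbb R^n,\ t>0,$$ satisfies $$4\frac{\partial q}{\partial t}=(2\mu-n)\,\Delta q-\Delta(\mathbf x\cdot\nabla q),$$ where $\Delta=\sum_i\partial_{x_i}^2$ and $\mathbf x\cdot\nabla q=\sum_i x_i\partial_{x_i}q$.
   Context: $G_{1,\mu}(t)$ is a positive process whose value at time $t$ has density $s^{\mu-1}e^{-s/t}/(t^\mu\Gamma(\mu))$, $s>0$; all Brownian motions are subordinated by the same process $G_{1,\mu}$. *)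

From Stdlib Require Import Reals Lra Lia ClassicalEpsilon.
Open Scope R_scope.

Fixpoint fsum (n : nat) (f : nat -> R) : R :=
  match n with O => 0 | S m => fsum m f + f m end.
Fixpoint fprod (n : nat) (f : nat -> R) : R :=
  match n with O => 1 | S m => fprod m f * f m end.

Definition is_int_0_inf (f : R -> R) (l : R) : Prop :=
  forall eps, 0 < eps -> exists a0 b0, 0 < a0 /\
    forall a b, 0 < a < a0 -> b0 < b -> a < b ->
      exists pr : Riemann_integrable f a b, Rabs (RiemannInt pr - l) < eps.

Definition int_0_inf (f : R -> R) : R :=
  epsilon (inhabits 0) (is_int_0_inf f).

Definition Gamma (mu : R) : R :=
  int_0_inf (fun s => Rpower s (mu - 1) * exp (- s)).

(* points of R^n are represented by x : nat -> R, using coordinates 0..n-1 *)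
Definition upd (x : nat -> R) (i : nat) (h : R) : nat -> R :=
  fun j => if Nat.eq_dec j i then h else x j.

Definition partial_lim (f : (nat -> R) -> R) (i : nat) (x : nat -> R) (l : R) : Prop :=
  derivable_pt_lim (fun h => f (upd x i h)) (x i) l.

Definition pderiv (i : nat) (f : (nat -> R) -> R) (x : nat -> R) : R :=
  epsilon (inhabits 0) (partial_lim f i x).

Definition laplacian (n : nat) (f : (nat -> R) -> R) (x : nat -> R) : R :=
  fsum n (fun i => pderiv i (pderiv i f) x).

Definition x_grad (n : nat) (f : (nat -> R) -> R) (x : nat -> R) : R :=
  fsum n (fun i => x i * pderiv i f x).

Definition integrand (n : nat) (mu : R) (x : nat -> R) (t s : R) : R :=
  fprod n (fun i => exp (- (x i)^2 / (2 * s)) / sqrt (2 * PI * s))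
  * (Rpower s (mu - 1) * exp (- s / t) / (Rpower t mu * Gamma mu)).

Definition dens (n : nat) (mu : R) (x : nat -> R) (t : R) : R :=
  int_0_inf (integrand n mu x t).

Definition nonzero_vec (n : nat) (x : nat -> R) : Prop :=
  exists i, (i < n)%nat /\ x i <> 0.

Definition has_partials (n : nat) (f : (nat -> R) -> R) : Prop :=
  forall y i, nonzero_vec n y -> (i < n)%nat -> exists l, partial_lim f i y l.

(* With r = |x|^2 and b = mu - 1 - n/2 the density is c t^(-mu) Psi_b(r, t), where
   Psi_g(r, t) = int_0^oo s^g e^(-r/(2s)) e^(-s/t) ds.  Differentiating under the integral
   gives d_r Psi_g = - Psi_(g-1) / 2 and d_t Psi_g = Psi_(g+1) / t^2, and integrating the
   s-derivative of the integrand gives (g+1) Psi_g + (r/2) Psi_(g-1) = Psi_(g+1) / t.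
   Both q and x . grad q are radial, so their Laplacians are combinations of the
   r-derivatives of Psi_b, and the equation becomes an algebraic identity between
   Psi_(b+1), ..., Psi_(b-3) that follows from three instances of the recurrence. *)

From Stdlib Require Import Reals ZArith Lra Lia ClassicalEpsilon Classical FunctionalExtensionality.
Open Scope R_scope.

(** * Derivatives *)

Lemma dlim_mul f g x a b : derivable_pt_lim f x a -> derivable_pt_lim g x b ->
  derivable_pt_lim (fun y => f y * g y) x (a * g x + f x * b).
Proof. apply derivable_pt_lim_mult. Qed.

Lemma dlim_add f g x a b : derivable_pt_lim f x a -> derivable_pt_lim g x b ->
  derivable_pt_lim (fun y => f y + g y) x (a + b).
Proof. apply derivable_pt_lim_plus. Qed.

Lemma dlim_sub f g x a b : derivable_pt_lim f x a -> derivable_pt_lim g x b ->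
  derivable_pt_lim (fun y => f y - g y) x (a - b).
Proof. apply derivable_pt_lim_minus. Qed.

Lemma dlim_comp f g x a b : derivable_pt_lim f x a -> derivable_pt_lim g (f x) b ->
  derivable_pt_lim (fun y => g (f y)) x (b * a).
Proof. apply derivable_pt_lim_comp. Qed.

Lemma dlim_scal c f x a : derivable_pt_lim f x a ->
  derivable_pt_lim (fun y => c * f y) x (c * a).
Proof. apply derivable_pt_lim_scal. Qed.

Lemma dlim_exp f x a : derivable_pt_lim f x a ->
  derivable_pt_lim (fun y => exp (f y)) x (exp (f x) * a).
Proof. intros H. apply (dlim_comp f exp); auto. apply derivable_pt_lim_exp. Qed.

Lemma dlim_ext f g x l : (forall y, f y = g y) ->
  derivable_pt_lim f x l -> derivable_pt_lim g x l.
Proof. intros E. replace g with f; auto. extensionality y; auto. Qed.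

Lemma dlim_val f x l l' : l = l' -> derivable_pt_lim f x l -> derivable_pt_lim f x l'.
Proof. intros ->; auto. Qed.

Lemma dlim_local f g x l d : 0 < d -> (forall z, Rabs (z - x) < d -> f z = g z) ->
  derivable_pt_lim f x l -> derivable_pt_lim g x l.
Proof.
  intros Hd E H eps Heps. destruct (H eps Heps) as [d1 Hd1].
  assert (Hm : 0 < Rmin d1 d) by (apply Rmin_pos; [apply cond_pos | auto]).
  exists (mkposreal _ Hm). intros h Hh Hhd. simpl in Hhd.
  generalize (Rmin_l d1 d) (Rmin_r d1 d); intros.
  rewrite <- !E.
  - apply Hd1; auto; lra.
  - rewrite Rminus_diag, Rabs_R0; auto.
  - replace (x + h - x) with h by ring. lra.
Qed.

Lemma dlim_inv x : 0 < x -> derivable_pt_lim (fun y => / y) x (- / (x * x)).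
Proof.
  intros Hx. apply (dlim_local (fun y => Rpower y (- (1))) _ _ _ x Hx).
  - intros z Hz. apply Rabs_def2 in Hz. rewrite Rpower_Ropp, Rpower_1; lra.
  - eapply dlim_val; [|apply derivable_pt_lim_power; auto].
    replace (- (1) - 1) with (- INR 2) by (simpl; ring).
    rewrite Rpower_Ropp, Rpower_pow by auto. simpl. field. lra.
Qed.

Lemma Rabs_between x y c : Rmin x y <= c <= Rmax x y -> Rabs (c - x) <= Rabs (y - x).
Proof.
  unfold Rmin, Rmax. destruct (Rle_dec x y); intros.
  - rewrite !Rabs_right; lra.
  - rewrite !Rabs_left1; lra.
Qed.

Lemma MVT_between f f' x y :
  (forall c, Rmin x y <= c <= Rmax x y -> derivable_pt_lim f c (f' c)) ->
  exists c, Rmin x y <= c <= Rmax x y /\ f y - f x = f' c * (y - x).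
Proof.
  intros H. destruct (Rtotal_order x y) as [Hl | [-> | Hg]].
  - rewrite Rmin_left, Rmax_right in * by lra.
    destruct (MVT_cor2 f f' x y Hl H) as [c [E Hc]]. exists c; split; [lra | auto].
  - exists y. rewrite Rmin_left, Rmax_left by lra. split; [lra | ring].
  - rewrite Rmin_right, Rmax_left in * by lra.
    destruct (MVT_cor2 f f' y x Hg H) as [c [E Hc]]. exists c; split; lra.
Qed.

Lemma second_order_remainder_le f f' f'' x0 d M x :
  (forall y, Rabs (y - x0) < d -> derivable_pt_lim f y (f' y)) ->
  (forall y, Rabs (y - x0) < d -> derivable_pt_lim f' y (f'' y)) ->
  (forall y, Rabs (y - x0) < d -> Rabs (f'' y) <= M) ->
  Rabs (x - x0) < d ->
  Rabs (f x - f x0 - (x - x0) * f' x0) <= (x - x0) ^ 2 * M.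
Proof.
  intros Hf Hf' HM Hx.
  destruct (MVT_between (fun y => f y - (y - x0) * f' x0) (fun y => f' y - f' x0) x0 x)
    as [c [Hc Ec]].
  { intros c Hc. apply Rabs_between in Hc.
    eapply dlim_val; [|apply dlim_sub; [apply Hf; lra|]].
    2:{ apply (dlim_mul (fun y => y - x0) (fun _ => f' x0)).
        - apply (dlim_sub (fun y => y) (fun _ => x0)).
          + apply derivable_pt_lim_id.
          + apply derivable_pt_lim_const.
        - apply derivable_pt_lim_const. }
    ring. }
  assert (Hcx : Rabs (c - x0) <= Rabs (x - x0)) by (apply Rabs_between; auto).
  destruct (MVT_between f' f'' x0 c) as [c' [Hc' Ec']].
  { intros c'' Hc''. apply Rabs_between in Hc''. apply Hf'. lra. }
  assert (Hc'x : Rabs (c' - x0) <= Rabs (c - x0)) by (apply Rabs_between; auto).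
  replace (f x - f x0 - (x - x0) * f' x0) with (f'' c' * (c - x0) * (x - x0))
    by (rewrite Rminus_diag, Rmult_0_l, Rminus_0_r in Ec; rewrite <- Ec'; lra).
  assert (HA : Rabs (f'' c') <= M) by (apply HM; lra).
  rewrite !Rabs_mult, <- pow2_abs.
  assert (Rabs (f'' c') * Rabs (c - x0) <= M * Rabs (x - x0))
    by (apply Rmult_le_compat; auto using Rabs_pos).
  generalize (Rabs_pos (x - x0)); intros. nra.
Qed.

Lemma derivable_pt_lim_of_quadratic_remainder (f : R -> R) x l d C : 0 < d ->
  (forall y, Rabs (y - x) < d -> Rabs (f y - f x - (y - x) * l) <= (y - x) ^ 2 * C) ->
  derivable_pt_lim f x l.
Proof.
  intros Hd Hrem eps Heps.
  set (C' := Rabs C + 1).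
  assert (HC' : 0 < C') by (unfold C'; generalize (Rabs_pos C); lra).
  assert (Hd' : 0 < Rmin d (eps / C')) by (apply Rmin_pos; auto; apply Rdiv_lt_0_compat; auto).
  exists (mkposreal _ Hd'). intros h Hh0 Hh. simpl in Hh.
  generalize (Rmin_l d (eps / C')) (Rmin_r d (eps / C')); intros.
  assert (Hb := Hrem (x + h) ltac:(replace (x + h - x) with h by ring; lra)).
  replace (x + h - x) with h in Hb by ring.
  replace ((f (x + h) - f x) / h - l) with ((f (x + h) - f x - h * l) / h) by (field; auto).
  assert (Hh1 : 0 < Rabs h) by (apply Rabs_pos_lt; auto).
  unfold Rdiv. rewrite Rabs_mult, Rabs_inv.
  apply Rmult_lt_reg_r with (Rabs h); auto. rewrite Rmult_assoc, Rinv_l, Rmult_1_r by lra.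
  assert (h ^ 2 * C <= Rabs h * (Rabs h * C'))
    by (rewrite <- pow2_abs; unfold C'; generalize (RRle_abs C); nra).
  assert (Rabs h * C' < eps)
    by (apply Rlt_le_trans with (eps / C' * C'); [apply Rmult_lt_compat_r | right; field]; lra).
  nra.
Qed.

(** * Riemann and improper integrals *)

Lemma RiemannInt_scal f a b k (pr : Riemann_integrable f a b)
  (pr' : Riemann_integrable (fun x => k * f x) a b) :
  RiemannInt pr' = k * RiemannInt pr.
Proof.
  assert (p0 := RiemannInt_P14 a b 0).
  assert (p3 : Riemann_integrable (fun x => fct_cte 0 x + k * f x) a b)
    by (apply RiemannInt_P10; auto).
  assert (E : (fun x => k * f x) = (fun x => fct_cte 0 x + k * f x))
    by (extensionality x; unfold fct_cte; ring).
  revert pr'; rewrite E; intros pr'.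
  rewrite (RiemannInt_P5 pr' p3), (RiemannInt_P13 p0 pr p3), RiemannInt_P15. ring.
Qed.

Lemma Riemann_integrable_lin2 f g c1 c2 a b :
  Riemann_integrable f a b -> Riemann_integrable g a b ->
  Riemann_integrable (fun s => c1 * f s + c2 * g s) a b.
Proof.
  intros p1 p2.
  apply (RiemannInt_P10 c2 (Riemann_integrable_scal c1 p1) p2).
Qed.

Lemma RiemannInt_lin2 f g c1 c2 a b
  (pr : Riemann_integrable (fun s => c1 * f s + c2 * g s) a b)
  (p1 : Riemann_integrable f a b) (p2 : Riemann_integrable g a b) :
  RiemannInt pr = c1 * RiemannInt p1 + c2 * RiemannInt p2.
Proof.
  set (p1' := Riemann_integrable_scal c1 p1).
  rewrite <- (RiemannInt_scal f a b c1 p1 p1').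
  rewrite <- (RiemannInt_P13 p1' p2 (RiemannInt_P10 c2 p1' p2)).
  apply RiemannInt_P5.
Qed.

Lemma RiemannInt_le f g a b (pr1 : Riemann_integrable f a b) (pr2 : Riemann_integrable g a b) :
  a <= b -> (forall x, a <= x <= b -> f x <= g x) -> RiemannInt pr1 <= RiemannInt pr2.
Proof. intros Hab H. apply RiemannInt_P19; auto. intros; apply H; lra. Qed.

Lemma RiemannInt_ge0 f a b (pr : Riemann_integrable f a b) :
  a <= b -> (forall x, a <= x <= b -> 0 <= f x) -> 0 <= RiemannInt pr.
Proof.
  intros Hab H. rewrite <- (Rmult_0_l (b - a)), <- (RiemannInt_P15 (RiemannInt_P14 a b 0)).
  apply RiemannInt_le; auto.
Qed.

Lemma RiemannInt_derivative (F f : R -> R) a b (pr : Riemann_integrable f a b) : a <= b ->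
  (forall x, a <= x <= b -> derivable_pt_lim F x (f x)) ->
  (forall x, a <= x <= b -> continuity_pt f x) -> RiemannInt pr = F b - F a.
Proof.
  intros Hab HD HC. destruct (Req_dec a b) as [<- | Hne].
  - rewrite RiemannInt_P9. ring.
  - rewrite (RiemannInt_P20 Hab (FTC_P1 Hab HC) pr).
    set (P := primitive Hab (FTC_P1 Hab HC)).
    destruct (MVT_cor2 (fun x => P x - F x) (fun _ => 0) a b) as [c [E _]]; [lra | |lra].
    intros c Hc. replace 0 with (f c - f c) by ring.
    apply dlim_sub; auto. apply RiemannInt_P28; auto.
Qed.

Lemma is_int_0_inf_unique f l1 l2 : is_int_0_inf f l1 -> is_int_0_inf f l2 -> l1 = l2.
Proof.
  intros H1 H2. apply NNPP; intro Hne.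
  assert (He : 0 < Rabs (l1 - l2) / 2)
    by (assert (0 < Rabs (l1 - l2)) by (apply Rabs_pos_lt; lra); lra).
  destruct (H1 _ He) as [a1 [b1 [Ha1 K1]]]. destruct (H2 _ He) as [a2 [b2 [Ha2 K2]]].
  set (a := Rmin a1 a2 / 2). set (b := Rmax (Rmax b1 b2) a + 1).
  assert (0 < Rmin a1 a2) by (apply Rmin_pos; auto).
  assert (0 < a < a1 /\ 0 < a < a2) by (unfold a; generalize (Rmin_l a1 a2) (Rmin_r a1 a2); lra).
  assert (b1 < b /\ b2 < b /\ a < b)
    by (unfold b; generalize (Rmax_l b1 b2) (Rmax_r b1 b2) (Rmax_l (Rmax b1 b2) a)
          (Rmax_r (Rmax b1 b2) a); lra).
  destruct (K1 a b) as [p1 E1]; try lra.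
  destruct (K2 a b) as [p2 E2]; try lra.
  rewrite (RiemannInt_P5 p1 p2) in E1.
  assert (Rabs (l1 - l2) <= Rabs (RiemannInt p2 - l2) + Rabs (RiemannInt p2 - l1)).
  { replace (l1 - l2) with ((RiemannInt p2 - l2) - (RiemannInt p2 - l1)) by ring.
    eapply Rle_trans; [apply Rabs_triang|]. rewrite Rabs_Ropp. lra. }
  lra.
Qed.

Lemma int_0_inf_eq f l : is_int_0_inf f l -> int_0_inf f = l.
Proof.
  intros H. apply (is_int_0_inf_unique f); auto.
  unfold int_0_inf. apply epsilon_spec. exists l; auto.
Qed.

Lemma is_int_0_inf_ext f g l : (forall s, 0 < s -> f s = g s) ->
  is_int_0_inf f l -> is_int_0_inf g l.
Proof.
  intros E H eps Heps. destruct (H eps Heps) as [a0 [b0 [Ha0 K]]].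
  exists a0, b0; split; auto. intros a b Ha Hb Hab.
  destruct (K a b Ha Hb Hab) as [pr Hpr].
  assert (pr' : Riemann_integrable g a b).
  { apply Riemann_integrable_ext with f; auto.
    intros x Hx. rewrite Rmin_left in Hx by lra. apply E. lra. }
  exists pr'. rewrite <- (RiemannInt_P18 pr pr'); auto; [lra |].
  intros; apply E; lra.
Qed.

Lemma is_int_0_inf_lin f g l1 l2 c : is_int_0_inf f l1 -> is_int_0_inf g l2 ->
  is_int_0_inf (fun s => f s + c * g s) (l1 + c * l2).
Proof.
  intros H1 H2 eps Heps.
  assert (Hc : 0 < 2 * (Rabs c + 1)) by (generalize (Rabs_pos c); lra).
  set (eta := eps / (2 * (Rabs c + 1))).
  assert (He : 0 < eta) by (apply Rdiv_lt_0_compat; auto).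
  destruct (H1 _ He) as [a1 [b1 [Ha1 K1]]]. destruct (H2 _ He) as [a2 [b2 [Ha2 K2]]].
  exists (Rmin a1 a2), (Rmax b1 b2). split; [apply Rmin_pos; auto |].
  intros a b Ha Hb Hab.
  generalize (Rmin_l a1 a2) (Rmin_r a1 a2) (Rmax_l b1 b2) (Rmax_r b1 b2); intros.
  destruct (K1 a b) as [p1 E1]; try lra. destruct (K2 a b) as [p2 E2]; try lra.
  exists (RiemannInt_P10 c p1 p2). rewrite (RiemannInt_P13 p1 p2 (RiemannInt_P10 c p1 p2)).
  replace (RiemannInt p1 + c * RiemannInt p2 - (l1 + c * l2))
    with ((RiemannInt p1 - l1) + c * (RiemannInt p2 - l2)) by ring.
  eapply Rle_lt_trans; [apply Rabs_triang|]. rewrite Rabs_mult.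
  assert (Rabs c * Rabs (RiemannInt p2 - l2) <= Rabs c * eta)
    by (apply Rmult_le_compat_l; [apply Rabs_pos | lra]).
  assert (eta + Rabs c * eta = eps / 2) by (unfold eta; field; generalize (Rabs_pos c); lra).
  lra.
Qed.

Lemma is_int_0_inf_zero : is_int_0_inf (fun _ => 0) 0.
Proof.
  intros eps Heps. exists 1, 0. split; [lra |]. intros a b _ _ _.
  exists (RiemannInt_P14 a b 0).
  change (Rabs (RiemannInt (RiemannInt_P14 a b 0) - 0) < eps).
  rewrite RiemannInt_P15, Rmult_0_l, Rminus_0_r, Rabs_R0. auto.
Qed.

Lemma is_int_0_inf_scal f l c : is_int_0_inf f l -> is_int_0_inf (fun s => c * f s) (c * l).
Proof.
  intros H. replace (c * l) with (0 + c * l) by ring.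
  apply is_int_0_inf_ext with (fun s => 0 + c * f s); [intros; ring |].
  apply is_int_0_inf_lin; auto. apply is_int_0_inf_zero.
Qed.

Lemma is_int_0_inf_lin2 f g l1 l2 c1 c2 : is_int_0_inf f l1 -> is_int_0_inf g l2 ->
  is_int_0_inf (fun s => c1 * f s + c2 * g s) (c1 * l1 + c2 * l2).
Proof. intros. apply is_int_0_inf_lin; auto. apply is_int_0_inf_scal; auto. Qed.

Lemma is_int_0_inf_nonneg_bounded (f : R -> R) (L : R) :
  (forall a b, 0 < a -> a <= b -> Riemann_integrable f a b) ->
  (forall s, 0 < s -> 0 <= f s) ->
  (forall a b (pr : Riemann_integrable f a b), 0 < a -> a <= b -> RiemannInt pr <= L) ->
  exists l, is_int_0_inf f l /\
    forall a b (pr : Riemann_integrable f a b), 0 < a -> a <= b -> RiemannInt pr <= l.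
Proof.
  intros HI HP HB.
  set (E := fun y => exists a b (pr : Riemann_integrable f a b),
                       0 < a /\ a <= b /\ y = RiemannInt pr).
  assert (Hbd : bound E) by (exists L; intros y [a [b [pr [? [? ->]]]]]; apply HB; auto).
  assert (Hne : exists y, E y).
  { set (p := HI 1 1 Rlt_0_1 (Rle_refl 1)).
    exists (RiemannInt p), 1, 1, p. repeat split; lra. }
  destruct (completeness E Hbd Hne) as [m [Hub Hlub]].
  assert (Up : forall a b (pr : Riemann_integrable f a b), 0 < a -> a <= b -> RiemannInt pr <= m)
    by (intros; apply Hub; exists a, b, pr; auto).
  exists m. split; auto.
  intros eps Heps.
  assert (Hclose : exists a1 b1 (pr1 : Riemann_integrable f a1 b1),
             0 < a1 /\ a1 <= b1 /\ m - eps < RiemannInt pr1).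
  { apply NNPP; intro N.
    assert (m <= m - eps); [| lra]. apply Hlub. intros y [a [b [pr [? [? ->]]]]].
    apply Rnot_lt_le; intro. apply N. exists a, b, pr; auto. }
  destruct Hclose as [a1 [b1 [pr1 [Ha1 [Hab1 Hm]]]]].
  exists a1, b1. split; auto. intros a b Ha Hb Hab.
  set (pr := HI a b (proj1 Ha) (Rlt_le _ _ Hab)). exists pr.
  assert (pA : Riemann_integrable f a a1) by (apply HI; lra).
  assert (pB : Riemann_integrable f b1 b) by (apply HI; lra).
  assert (pC : Riemann_integrable f a b1) by (apply HI; lra).
  rewrite <- (RiemannInt_P26 pC pB pr), <- (RiemannInt_P26 pA pr1 pC).
  assert (0 <= RiemannInt pA) by (apply RiemannInt_ge0; [lra | intros; apply HP; lra]).
  assert (0 <= RiemannInt pB) by (apply RiemannInt_ge0; [lra | intros; apply HP; lra]).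
  assert (RiemannInt pA + RiemannInt pr1 + RiemannInt pB <= m).
  { rewrite (RiemannInt_P26 pA pr1 pC), (RiemannInt_P26 pC pB pr). apply Up; lra. }
  rewrite Rabs_left1; lra.
Qed.

Lemma is_int_0_inf_abs_le (f M : R -> R) l L : is_int_0_inf f l ->
  (forall s, 0 < s -> Rabs (f s) <= M s) ->
  (forall a b, 0 < a -> a <= b -> Riemann_integrable M a b) ->
  (forall a b (pr : Riemann_integrable M a b), 0 < a -> a <= b -> RiemannInt pr <= L) ->
  Rabs l <= L.
Proof.
  intros Hf HfM HMi HML. apply Rle_plus_epsilon. intros eps Heps.
  destruct (Hf eps Heps) as [a0 [b0 [Ha0 K]]].
  set (a := a0 / 2). set (b := Rmax b0 a0 + 1).
  assert (0 < a < a0 /\ b0 < b /\ a < b)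
    by (unfold a, b; generalize (Rmax_l b0 a0) (Rmax_r b0 a0); lra).
  destruct (K a b) as [pr Hpr]; try lra.
  assert (Hab : a <= b) by lra.
  assert (HRM : Rabs (RiemannInt pr) <= L).
  { eapply Rle_trans; [apply (RiemannInt_P17 pr (RiemannInt_P16 pr) Hab) |].
    eapply Rle_trans; [apply (RiemannInt_le _ _ a b _ (HMi a b ltac:(lra) Hab) Hab) |].
    - intros s Hs. apply HfM. lra.
    - apply HML; lra. }
  replace l with (RiemannInt pr - (RiemannInt pr - l)) by ring.
  eapply Rle_trans; [apply Rabs_triang |]. rewrite Rabs_Ropp. lra.
Qed.

Lemma derivable_pt_lim_int_0_inf (F G H : R -> R -> R) (IF M : R -> R) p0 d L g0 :
  0 < d ->
  (forall p s, Rabs (p - p0) < d -> 0 < s -> derivable_pt_lim (fun q => F q s) p (G p s)) ->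
  (forall p s, Rabs (p - p0) < d -> 0 < s -> derivable_pt_lim (fun q => G q s) p (H p s)) ->
  (forall p s, Rabs (p - p0) < d -> 0 < s -> Rabs (H p s) <= M s) ->
  (forall a b, 0 < a -> a <= b -> Riemann_integrable M a b) ->
  (forall a b (pr : Riemann_integrable M a b), 0 < a -> a <= b -> RiemannInt pr <= L) ->
  (forall p, Rabs (p - p0) < d -> is_int_0_inf (F p) (IF p)) ->
  is_int_0_inf (G p0) g0 ->
  derivable_pt_lim IF p0 g0.
Proof.
  intros Hd HF HG HH HMi HML HI HG0.
  apply (derivable_pt_lim_of_quadratic_remainder IF p0 g0 d L Hd).
  intros p Hp.
  assert (Hp0 : Rabs (p0 - p0) < d) by (rewrite Rminus_diag, Rabs_R0; auto).
  assert (Hrem : is_int_0_inf (fun s => F p s + -1 * F p0 s + - (p - p0) * G p0 s)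
                   (IF p + -1 * IF p0 + - (p - p0) * g0))
    by (repeat apply is_int_0_inf_lin; auto).
  replace (IF p - IF p0 - (p - p0) * g0) with (IF p + -1 * IF p0 + - (p - p0) * g0) by ring.
  apply (is_int_0_inf_abs_le _ (fun s => (p - p0) ^ 2 * M s) _ _ Hrem).
  - intros s Hs.
    replace (F p s + -1 * F p0 s + - (p - p0) * G p0 s)
      with (F p s - F p0 s - (p - p0) * G p0 s) by ring.
    apply (second_order_remainder_le (fun q => F q s) (fun q => G q s) (fun q => H q s) p0 d);
      auto.
  - intros a b Ha Hab. apply Riemann_integrable_scal; auto.
  - intros a b pr Ha Hab.
    rewrite (RiemannInt_scal M a b _ (HMi a b Ha Hab) pr).
    apply Rmult_le_compat_l; [apply pow2_ge_0 | auto].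
Qed.

Lemma exp_pow_INR x N : exp x ^ N = exp (INR N * x).
Proof.
  induction N as [|N IH]; [simpl; rewrite Rmult_0_l, exp_0; auto |].
  rewrite S_INR. simpl pow. rewrite IH, <- exp_plus. f_equal; ring.
Qed.

Lemma exp_le_exp x y : x <= y -> exp x <= exp y.
Proof. intros [H | ->]; [left; apply exp_increasing |]; lra. Qed.

Lemma exp_le_1 x : x <= 0 -> exp x <= 1.
Proof. intros. rewrite <- exp_0. apply exp_le_exp; auto. Qed.

Lemma exp_neg_le_inv y : 0 < y -> exp (- y) <= / y.
Proof.
  intros. rewrite exp_Ropp. apply Rinv_le_contravar; auto.
  generalize (exp_ineq1_le y); lra.
Qed.

Lemma Rpower_pos x y : 0 < Rpower x y.
Proof. apply exp_pos. Qed.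

Lemma Rpower_inv u g : 0 < u -> Rpower (/ u) g = Rpower u (- g).
Proof. intros. unfold Rpower. rewrite ln_Rinv by auto. f_equal; ring. Qed.

Lemma Rpower_minus_1 s g : 0 < s -> Rpower s (g - 1) = Rpower s g / s.
Proof. intros. unfold Rminus. rewrite Rpower_plus, Rpower_Ropp, Rpower_1; auto. Qed.

(* Compare [u^g] with [u^N] for an integer [N >= g] and use [(k u / N)^N <= e^(k u)]. *)
Lemma Rpower_exp_bounded g k : 0 < k ->
  exists C, 0 < C /\ forall u, 1 <= u -> Rpower u g * exp (- (k * u)) <= C.
Proof.
  intros Hk.
  set (N := S (Z.abs_nat (up g))).
  assert (HN : g <= INR N).
  { destruct (archimed g) as [H1 _]. unfold N. rewrite S_INR, INR_IZR_INZ, Zabs2Nat.id_abs.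
    assert (IZR (up g) <= IZR (Z.abs (up g))) by (apply IZR_le; lia). lra. }
  assert (HN1 : 0 < INR N) by (unfold N; rewrite S_INR; generalize (pos_INR (Z.abs_nat (up g))); lra).
  assert (Hkn : 0 < k / INR N) by (apply Rdiv_lt_0_compat; auto).
  assert (Hp : 0 < (k / INR N) ^ N) by (apply pow_lt; auto).
  exists (/ ((k / INR N) ^ N)). split; [apply Rinv_0_lt_compat; auto |]. intros u Hu.
  assert (E1 : Rpower u g <= u ^ N) by (rewrite <- Rpower_pow by lra; apply Rle_Rpower; auto).
  assert (E2 : (k / INR N) ^ N * u ^ N <= exp (k * u)).
  { rewrite <- Rpow_mult_distr.
    replace (exp (k * u)) with (exp (k * u / INR N) ^ N)
      by (rewrite exp_pow_INR; f_equal; field; lra).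
    apply pow_incr. split; [apply Rmult_le_pos; lra |].
    generalize (exp_ineq1_le (k * u / INR N)).
    replace (k / INR N * u) with (k * u / INR N) by (field; lra). lra. }
  assert (0 < exp (k * u)) by apply exp_pos.
  rewrite exp_Ropp. apply Rmult_le_reg_l with ((k / INR N) ^ N); auto.
  rewrite Rinv_r by lra. apply Rmult_le_reg_r with (exp (k * u)); auto.
  rewrite Rmult_1_l, <- Rmult_assoc, Rmult_assoc, Rinv_l, Rmult_1_r by lra.
  apply Rle_trans with ((k / INR N) ^ N * u ^ N); [| lra].
  apply Rmult_le_compat_l; lra.
Qed.

(** * The generalized inverse Gaussian kernel *)

Definition gig_kernel (g r t s : R) : R := Rpower s g * exp (- r / (2 * s)) * exp (- s / t).

Definition gig_integral (g r t : R) : R := int_0_inf (gig_kernel g r t).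

Lemma gig_kernel_pos g r t s : 0 < gig_kernel g r t s.
Proof.
  unfold gig_kernel.
  generalize (Rpower_pos s g) (exp_pos (- r / (2 * s))) (exp_pos (- s / t)); intros.
  repeat apply Rmult_lt_0_compat; auto.
Qed.

Lemma gig_kernel_pred g r t s : 0 < s -> gig_kernel (g - 1) r t s = gig_kernel g r t s / s.
Proof. intros. unfold gig_kernel. rewrite Rpower_minus_1 by auto. field. lra. Qed.

Lemma gig_kernel_succ g r t s : 0 < s -> gig_kernel (g + 1) r t s = gig_kernel g r t s * s.
Proof.
  intros. replace g with ((g + 1) - 1) at 2 by ring. rewrite gig_kernel_pred by auto.
  field. lra.
Qed.

Lemma derivable_gig_kernel_r g r t s : 0 < s ->
  derivable_pt_lim (fun q => gig_kernel g q t s) r (- / 2 * gig_kernel (g - 1) r t s).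
Proof.
  intros Hs.
  apply dlim_ext with (fun q => (Rpower s g * exp (- s / t)) * exp (- / (2 * s) * q)).
  { intros q. unfold gig_kernel. replace (- q / (2 * s)) with (- / (2 * s) * q) by (field; lra).
    ring. }
  eapply dlim_val; [| apply dlim_scal, dlim_exp, dlim_scal, derivable_pt_lim_id].
  rewrite gig_kernel_pred by auto. unfold gig_kernel.
  replace (- / (2 * s) * r) with (- r / (2 * s)) by (field; lra). field. lra.
Qed.

Lemma derivable_gig_kernel_t g r t s : 0 < s -> 0 < t ->
  derivable_pt_lim (fun q => gig_kernel g r q s) t (/ t * / t * gig_kernel (g + 1) r t s).
Proof.
  intros Hs Ht.
  apply dlim_ext with (fun q => (Rpower s g * exp (- r / (2 * s))) * exp (- s * / q)).
  { intros q. unfold gig_kernel, Rdiv. ring. }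
  eapply dlim_val; [| apply dlim_scal, dlim_exp, dlim_scal, dlim_inv; auto].
  rewrite gig_kernel_succ by auto. unfold gig_kernel, Rdiv. field. lra.
Qed.

Lemma derivable_gig_kernel_s g r t s : 0 < s -> 0 < t ->
  derivable_pt_lim (gig_kernel g r t) s
    (g * gig_kernel (g - 1) r t s + r / 2 * gig_kernel (g - 1 - 1) r t s
     - / t * gig_kernel g r t s).
Proof.
  intros Hs Ht.
  apply dlim_ext with (fun q => (Rpower q g * exp (- r / 2 * / q)) * exp (- / t * q)).
  { intros q. unfold gig_kernel.
    replace (- r / (2 * q)) with (- r / 2 * / q) by (unfold Rdiv; rewrite Rinv_mult; ring).
    replace (- q / t) with (- / t * q) by (unfold Rdiv; ring). reflexivity. }
  eapply dlim_val.
  2:{ apply dlim_mul; [apply dlim_mul |].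
      - apply derivable_pt_lim_power; auto.
      - apply dlim_exp, dlim_scal, dlim_inv; auto.
      - apply dlim_exp, dlim_scal, derivable_pt_lim_id. }
  rewrite !gig_kernel_pred by auto. unfold gig_kernel. rewrite Rpower_minus_1 by auto.
  cbv beta. replace (- r / 2 * / s) with (- r / (2 * s)) by (unfold Rdiv; rewrite Rinv_mult; ring).
  replace (- / t * s) with (- s / t) by (unfold Rdiv; ring). field. split; lra.
Qed.

Lemma continuity_gig_kernel g r t s : 0 < s -> 0 < t -> continuity_pt (gig_kernel g r t) s.
Proof.
  intros. apply derivable_continuous_pt. eexists. apply derivable_gig_kernel_s; auto.
Qed.

Lemma Riemann_integrable_gig_kernel g r t a b : 0 < t -> 0 < a -> a <= b ->
  Riemann_integrable (gig_kernel g r t) a b.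
Proof.
  intros. apply continuity_implies_RiemannInt; auto.
  intros; apply continuity_gig_kernel; lra.
Qed.

Lemma gig_kernel_anti_r g r1 r2 t s : 0 < s -> r1 <= r2 ->
  gig_kernel g r2 t s <= gig_kernel g r1 t s.
Proof.
  intros. unfold gig_kernel. apply Rmult_le_compat_r; [left; apply exp_pos |].
  apply Rmult_le_compat_l; [left; apply Rpower_pos |].
  apply exp_le_exp. unfold Rdiv. assert (0 < / (2 * s)) by (apply Rinv_0_lt_compat; lra). nra.
Qed.

Lemma gig_kernel_mono_t g r t1 t2 s : 0 < s -> 0 < t1 -> t1 <= t2 ->
  gig_kernel g r t1 s <= gig_kernel g r t2 s.
Proof.
  intros. unfold gig_kernel.
  apply Rmult_le_compat_l; [apply Rmult_le_pos; left; [apply Rpower_pos | apply exp_pos] |].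
  apply exp_le_exp. unfold Rdiv. rewrite <- !Ropp_mult_distr_l. apply Ropp_le_contravar.
  apply Rmult_le_compat_l; [lra |]. apply Rinv_le_contravar; lra.
Qed.

Lemma gig_kernel_le_near_0 g r t : 0 < r -> 0 < t -> exists C, 0 < C /\
  forall s, 0 < s <= 1 -> gig_kernel g r t s <= C * exp (- (r / 4) * / s).
Proof.
  intros Hr Ht. destruct (Rpower_exp_bounded (- g) (r / 4)) as [C [HC HCb]]; [lra |].
  exists C. split; auto. intros s [Hs1 Hs2].
  set (u := / s).
  assert (Hu : 1 <= u) by (unfold u; rewrite <- Rinv_1; apply Rinv_le_contravar; lra).
  assert (Hsu : s = / u) by (unfold u; rewrite Rinv_inv; auto).
  assert (HCu := HCb u Hu).
  unfold gig_kernel.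
  replace (exp (- r / (2 * s))) with (exp (- (r / 4 * u)) * exp (- (r / 4) * u))
    by (rewrite <- exp_plus; f_equal; unfold u; field; lra).
  rewrite Hsu at 1. rewrite Rpower_inv by lra. fold u.
  assert (exp (- s / t) <= 1).
  { apply exp_le_1. unfold Rdiv. assert (0 < / t) by (apply Rinv_0_lt_compat; auto). nra. }
  generalize (exp_pos (- s / t)) (exp_pos (- (r / 4) * u)) (exp_pos (- (r / 4 * u)))
    (Rpower_pos u (- g)); intros.
  rewrite <- Rmult_assoc.
  apply Rle_trans with (Rpower u (- g) * exp (- (r / 4 * u)) * exp (- (r / 4) * u) * 1).
  - apply Rmult_le_compat_l; [apply Rmult_le_pos; [apply Rmult_le_pos |] |]; lra.
  - rewrite Rmult_1_r. apply Rmult_le_compat_r; lra.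
Qed.

Lemma gig_kernel_le_near_inf g r t : 0 <= r -> 0 < t -> exists C, 0 < C /\
  forall s, 1 <= s -> gig_kernel g r t s <= C * exp (- (/ (2 * t) * s)).
Proof.
  intros Hr Ht. destruct (Rpower_exp_bounded g (/ (2 * t))) as [C [HC HCb]].
  { apply Rinv_0_lt_compat; lra. }
  exists C. split; auto. intros s Hs. assert (HCs := HCb s Hs).
  unfold gig_kernel.
  replace (exp (- s / t)) with (exp (- (/ (2 * t) * s)) * exp (- (/ (2 * t) * s)))
    by (rewrite <- exp_plus; f_equal; field; lra).
  assert (exp (- r / (2 * s)) <= 1).
  { apply exp_le_1. unfold Rdiv. assert (0 < / (2 * s)) by (apply Rinv_0_lt_compat; lra). nra. }
  generalize (exp_pos (- r / (2 * s))) (exp_pos (- (/ (2 * t) * s))) (Rpower_pos s g); intros.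
  apply Rle_trans with (Rpower s g * 1 * (exp (- (/ (2 * t) * s)) * exp (- (/ (2 * t) * s)))).
  - apply Rmult_le_compat_r; [nra |]. apply Rmult_le_compat_l; lra.
  - rewrite Rmult_1_r, <- Rmult_assoc. apply Rmult_le_compat_r; lra.
Qed.

Definition gig_majorant (k l C1 C2 s : R) : R :=
  C1 * (exp (- k * / s) * / s * / s) + C2 * exp (- l * s).

Lemma derivable_gig_majorant_primitive k l C1 C2 s : 0 < k -> 0 < l -> 0 < s ->
  derivable_pt_lim (fun s => C1 / k * exp (- k * / s) - C2 / l * exp (- l * s)) s
    (gig_majorant k l C1 C2 s).
Proof.
  intros. eapply dlim_val.
  2:{ apply dlim_sub; apply dlim_scal, dlim_exp, dlim_scal;
      [apply dlim_inv; auto | apply derivable_pt_lim_id]. }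
  unfold gig_majorant. field. lra.
Qed.

Lemma continuity_gig_majorant k l C1 C2 s : 0 < s -> continuity_pt (gig_majorant k l C1 C2) s.
Proof.
  intros. apply derivable_continuous_pt. eexists. unfold gig_majorant.
  apply dlim_add; apply dlim_scal; [apply dlim_mul; [apply dlim_mul |] |].
  - apply dlim_exp, dlim_scal, dlim_inv; auto.
  - apply dlim_inv; auto.
  - apply dlim_inv; auto.
  - apply dlim_exp, dlim_scal, derivable_pt_lim_id.
Qed.

Lemma RiemannInt_gig_majorant_le k l C1 C2 a b
  (pr : Riemann_integrable (gig_majorant k l C1 C2) a b) :
  0 < k -> 0 < l -> 0 <= C1 -> 0 <= C2 -> 0 < a -> a <= b -> RiemannInt pr <= C1 / k + C2 / l.
Proof.
  intros Hk Hl HC1 HC2 Ha Hab.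
  rewrite (RiemannInt_derivative (fun s => C1 / k * exp (- k * / s) - C2 / l * exp (- l * s))
             _ a b pr Hab).
  2:{ intros; apply derivable_gig_majorant_primitive; lra. }
  2:{ intros; apply continuity_gig_majorant; lra. }
  assert (exp (- k * / b) <= 1)
    by (apply exp_le_1; assert (0 < / b) by (apply Rinv_0_lt_compat; lra); nra).
  assert (exp (- l * a) <= 1) by (apply exp_le_1; nra).
  generalize (exp_pos (- l * b)) (exp_pos (- k * / a)); intros.
  assert (0 <= C1 / k) by (unfold Rdiv; apply Rmult_le_pos; [auto | left; apply Rinv_0_lt_compat; auto]).
  assert (0 <= C2 / l) by (unfold Rdiv; apply Rmult_le_pos; [auto | left; apply Rinv_0_lt_compat; auto]).
  nra.
Qed.

Lemma gig_kernel_le_majorant g r t : 0 < r -> 0 < t -> exists C1 C2, 0 < C1 /\ 0 < C2 /\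
  forall s, 0 < s -> gig_kernel g r t s <= gig_majorant (r / 4) (/ (2 * t)) C1 C2 s.
Proof.
  intros Hr Ht.
  destruct (gig_kernel_le_near_0 (g + 1 + 1) r t Hr Ht) as [C1 [HC1 H0]].
  destruct (gig_kernel_le_near_inf g r t (Rlt_le _ _ Hr) Ht) as [C2 [HC2 Hinf]].
  exists C1, C2. split; [auto | split; [auto |]]. intros s Hs. unfold gig_majorant.
  generalize (exp_pos (- (r / 4) * / s)) (exp_pos (- / (2 * t) * s)); intros.
  assert (0 < / s) by (apply Rinv_0_lt_compat; auto).
  destruct (Rle_dec s 1).
  - assert (Hs1 := H0 s ltac:(lra)). rewrite !gig_kernel_succ in Hs1 by auto.
    assert (gig_kernel g r t s <= C1 * (exp (- (r / 4) * / s) * / s * / s)).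
    { apply Rmult_le_reg_r with (s * s); [nra |].
      replace (C1 * (exp (- (r / 4) * / s) * / s * / s) * (s * s))
        with (C1 * exp (- (r / 4) * / s)) by (field; lra). lra. }
    assert (0 <= C2 * exp (- / (2 * t) * s)) by (apply Rmult_le_pos; lra). lra.
  - assert (Hs2 := Hinf s ltac:(lra)).
    assert (0 <= C1 * (exp (- (r / 4) * / s) * / s * / s))
      by (apply Rmult_le_pos; [lra |]; apply Rmult_le_pos; [apply Rmult_le_pos |]; lra).
    replace (- / (2 * t) * s) with (- (/ (2 * t) * s)) by ring. lra.
Qed.

Lemma gig_kernel_partial_integrals_bounded g r t : 0 < r -> 0 < t -> exists L,
  forall a b (pr : Riemann_integrable (gig_kernel g r t) a b), 0 < a -> a <= b ->
    RiemannInt pr <= L.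
Proof.
  intros Hr Ht. destruct (gig_kernel_le_majorant g r t Hr Ht) as [C1 [C2 [HC1 [HC2 Hle]]]].
  assert (Hl : 0 < / (2 * t)) by (apply Rinv_0_lt_compat; lra).
  exists (C1 / (r / 4) + C2 / / (2 * t)). intros a b pr Ha Hab.
  assert (prM : Riemann_integrable (gig_majorant (r / 4) (/ (2 * t)) C1 C2) a b)
    by (apply continuity_implies_RiemannInt; auto; intros; apply continuity_gig_majorant; lra).
  apply Rle_trans with (RiemannInt prM).
  - apply RiemannInt_le; auto. intros; apply Hle; lra.
  - apply RiemannInt_gig_majorant_le; lra.
Qed.

Lemma gig_integral_spec g r t : 0 < r -> 0 < t ->
  is_int_0_inf (gig_kernel g r t) (gig_integral g r t) /\
  forall a b (pr : Riemann_integrable (gig_kernel g r t) a b), 0 < a -> a <= b ->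
    RiemannInt pr <= gig_integral g r t.
Proof.
  intros Hr Ht. destruct (gig_kernel_partial_integrals_bounded g r t Hr Ht) as [L HL].
  destruct (is_int_0_inf_nonneg_bounded (gig_kernel g r t) L) as [l [H1 H2]]; auto.
  - intros; apply Riemann_integrable_gig_kernel; auto.
  - intros; left; apply gig_kernel_pos.
  - unfold gig_integral. rewrite (int_0_inf_eq _ _ H1). auto.
Qed.

Lemma is_int_gig_integral g r t : 0 < r -> 0 < t ->
  is_int_0_inf (gig_kernel g r t) (gig_integral g r t).
Proof. apply gig_integral_spec. Qed.

Lemma RiemannInt_gig_kernel_le g r t a b (pr : Riemann_integrable (gig_kernel g r t) a b) :
  0 < r -> 0 < t -> 0 < a -> a <= b -> RiemannInt pr <= gig_integral g r t.
Proof. intros; apply gig_integral_spec; auto. Qed.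

Lemma derivable_gig_integral_r g r t : 0 < r -> 0 < t ->
  derivable_pt_lim (fun q => gig_integral g q t) r (- / 2 * gig_integral (g - 1) r t).
Proof.
  intros Hr Ht.
  apply (derivable_pt_lim_int_0_inf (fun p s => gig_kernel g p t s)
           (fun p s => - / 2 * gig_kernel (g - 1) p t s)
           (fun p s => - / 2 * (- / 2 * gig_kernel (g - 1 - 1) p t s))
           (fun q => gig_integral g q t) (fun s => / 4 * gig_kernel (g - 1 - 1) (r / 2) t s)
           r (r / 2) (/ 4 * gig_integral (g - 1 - 1) (r / 2) t)); try lra.
  - intros. apply derivable_gig_kernel_r; auto.
  - intros. apply dlim_scal, derivable_gig_kernel_r; auto.
  - intros p s Hp Hs. apply Rabs_def2 in Hp.
    rewrite Rabs_right by (generalize (gig_kernel_pos (g - 1 - 1) p t s); lra).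
    replace (- / 2 * (- / 2 * gig_kernel (g - 1 - 1) p t s))
      with (/ 4 * gig_kernel (g - 1 - 1) p t s) by field.
    apply Rmult_le_compat_l; [lra |]. apply gig_kernel_anti_r; lra.
  - intros. apply Riemann_integrable_scal, Riemann_integrable_gig_kernel; auto.
  - intros a b pr Ha Hab.
    rewrite (RiemannInt_scal _ a b _ (Riemann_integrable_gig_kernel _ _ _ a b Ht Ha Hab) pr).
    apply Rmult_le_compat_l; [lra |]. apply RiemannInt_gig_kernel_le; lra.
  - intros p Hp. apply Rabs_def2 in Hp. apply is_int_gig_integral; lra.
  - apply is_int_0_inf_scal, is_int_gig_integral; auto.
Qed.

Lemma gig_kernel_t_curvature_le g r t p s : 0 < s -> 0 < t -> Rabs (p - t) < t / 2 ->
  Rabs (- (2 * (/ p) ^ 3 * gig_kernel (g + 1) r p s) + (/ p) ^ 4 * gig_kernel (g + 1 + 1) r p s)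
  <= 2 * (2 / t) ^ 3 * gig_kernel (g + 1) r (3 * t / 2) s
     + (2 / t) ^ 4 * gig_kernel (g + 1 + 1) r (3 * t / 2) s.
Proof.
  intros Hs Ht Hp. apply Rabs_def2 in Hp.
  set (w := / p). assert (Hw : 0 < w) by (apply Rinv_0_lt_compat; lra).
  assert (Hw2 : w <= 2 / t).
  { unfold w, Rdiv. rewrite <- (Rinv_inv 2), <- Rinv_mult. apply Rinv_le_contravar; lra. }
  generalize (gig_kernel_pos (g + 1) r p s) (gig_kernel_pos (g + 1 + 1) r p s); intros.
  assert (0 <= w ^ 3) by (apply pow_le; lra). assert (0 <= w ^ 4) by (apply pow_le; lra).
  assert (gig_kernel (g + 1) r p s <= gig_kernel (g + 1) r (3 * t / 2) s)
    by (apply gig_kernel_mono_t; lra).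
  assert (gig_kernel (g + 1 + 1) r p s <= gig_kernel (g + 1 + 1) r (3 * t / 2) s)
    by (apply gig_kernel_mono_t; lra).
  assert (w ^ 3 <= (2 / t) ^ 3) by (apply pow_incr; lra).
  assert (w ^ 4 <= (2 / t) ^ 4) by (apply pow_incr; lra).
  eapply Rle_trans; [apply Rabs_triang |]. rewrite Rabs_Ropp.
  rewrite (Rabs_right (2 * w ^ 3 * _)), (Rabs_right (w ^ 4 * _))
    by (apply Rle_ge, Rmult_le_pos; [apply Rmult_le_pos |]; lra).
  apply Rplus_le_compat.
  - rewrite !Rmult_assoc. apply Rmult_le_compat_l; [lra |]. apply Rmult_le_compat; lra.
  - apply Rmult_le_compat; lra.
Qed.

Lemma derivable_gig_integral_t g r t : 0 < r -> 0 < t ->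
  derivable_pt_lim (fun q => gig_integral g r q) t (/ t * / t * gig_integral (g + 1) r t).
Proof.
  intros Hr Ht.
  set (T := 3 * t / 2). set (c1 := 2 * (2 / t) ^ 3). set (c2 := (2 / t) ^ 4).
  assert (HT : 0 < T) by (unfold T; lra).
  assert (Hc1 : 0 <= c1) by (unfold c1; apply Rmult_le_pos; [lra | apply pow_le];
                             unfold Rdiv; apply Rmult_le_pos; [lra | left; apply Rinv_0_lt_compat; lra]).
  assert (Hc2 : 0 <= c2) by (unfold c2; apply pow_le;
                             unfold Rdiv; apply Rmult_le_pos; [lra | left; apply Rinv_0_lt_compat; lra]).
  apply (derivable_pt_lim_int_0_inf (fun p s => gig_kernel g r p s)
           (fun p s => / p * / p * gig_kernel (g + 1) r p s)
           (fun p s => - (2 * (/ p) ^ 3 * gig_kernel (g + 1) r p s)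
                       + (/ p) ^ 4 * gig_kernel (g + 1 + 1) r p s)
           (fun q => gig_integral g r q)
           (fun s => c1 * gig_kernel (g + 1) r T s + c2 * gig_kernel (g + 1 + 1) r T s)
           t (t / 2) (c1 * gig_integral (g + 1) r T + c2 * gig_integral (g + 1 + 1) r T));
    try lra.
  - intros p s Hp Hs. apply Rabs_def2 in Hp. apply derivable_gig_kernel_t; lra.
  - intros p s Hp Hs. apply Rabs_def2 in Hp.
    eapply dlim_val.
    2:{ apply (dlim_mul (fun q => / q * / q) (fun q => gig_kernel (g + 1) r q s)).
        - apply (dlim_mul (fun q => / q) (fun q => / q)); apply dlim_inv; lra.
        - apply derivable_gig_kernel_t; lra. }
    field. lra.
  - intros p s Hp Hs. apply gig_kernel_t_curvature_le; auto.
  - intros. apply Riemann_integrable_lin2; apply Riemann_integrable_gig_kernel; auto.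
  - intros a b pr Ha Hab.
    rewrite (RiemannInt_lin2 _ _ c1 c2 a b pr (Riemann_integrable_gig_kernel (g + 1) r T a b HT Ha Hab)
               (Riemann_integrable_gig_kernel (g + 1 + 1) r T a b HT Ha Hab)).
    apply Rplus_le_compat; apply Rmult_le_compat_l; auto; apply RiemannInt_gig_kernel_le; auto.
  - intros p Hp. apply Rabs_def2 in Hp. apply is_int_gig_integral; lra.
  - apply is_int_0_inf_scal, is_int_gig_integral; auto.
Qed.

Lemma gig_kernel_vanishes_at_0 g r t : 0 < r -> 0 < t -> forall eps, 0 < eps ->
  exists a0, 0 < a0 /\ forall a, 0 < a < a0 -> gig_kernel g r t a < eps.
Proof.
  intros Hr Ht eps Heps. destruct (gig_kernel_le_near_0 g r t Hr Ht) as [C [HC HCb]].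
  exists (Rmin 1 (eps * r / (8 * C))). split.
  { apply Rmin_pos; [lra |]. apply Rdiv_lt_0_compat; nra. }
  intros a [Ha1 Ha2]. generalize (Rmin_l 1 (eps * r / (8 * C))) (Rmin_r 1 (eps * r / (8 * C))); intros.
  assert (Ey : exp (- (r / 4) * / a) <= 4 * a / r).
  { replace (4 * a / r) with (/ (r / 4 * / a)) by (field; lra).
    replace (- (r / 4) * / a) with (- (r / 4 * / a)) by ring.
    apply exp_neg_le_inv. apply Rmult_lt_0_compat; [lra | apply Rinv_0_lt_compat; lra]. }
  apply Rle_lt_trans with (C * (4 * a / r)).
  - eapply Rle_trans; [apply HCb; lra |]. apply Rmult_le_compat_l; lra.
  - apply Rlt_le_trans with (C * (4 * (eps * r / (8 * C)) / r)).
    + apply Rmult_lt_compat_l; auto. unfold Rdiv. apply Rmult_lt_compat_r; [apply Rinv_0_lt_compat |]; lra.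
    + replace (C * (4 * (eps * r / (8 * C)) / r)) with (eps / 2) by (field; lra). lra.
Qed.

Lemma gig_kernel_vanishes_at_inf g r t : 0 < r -> 0 < t -> forall eps, 0 < eps ->
  exists b0, 0 < b0 /\ forall b, b0 < b -> gig_kernel g r t b < eps.
Proof.
  intros Hr Ht eps Heps. destruct (gig_kernel_le_near_inf g r t (Rlt_le _ _ Hr) Ht) as [C [HC HCb]].
  set (l := / (2 * t)). assert (Hl : 0 < l) by (unfold l; apply Rinv_0_lt_compat; lra).
  exists (Rmax 1 (2 * C / (l * eps))). split; [apply Rlt_le_trans with 1; [lra | apply Rmax_l] |].
  intros b Hb. generalize (Rmax_l 1 (2 * C / (l * eps))) (Rmax_r 1 (2 * C / (l * eps))); intros.
  assert (Ey : exp (- (l * b)) <= / (l * b)) by (apply exp_neg_le_inv; nra).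
  apply Rle_lt_trans with (C * / (l * b)).
  - eapply Rle_trans; [apply HCb; lra |]. fold l. apply Rmult_le_compat_l; lra.
  - assert (2 * C < b * (l * eps)).
    { apply Rmult_lt_reg_r with (/ (l * eps)); [apply Rinv_0_lt_compat; nra |].
      replace (b * (l * eps) * / (l * eps)) with b by (field; nra). unfold Rdiv in *. lra. }
    apply Rmult_lt_reg_r with (l * b); [nra |].
    rewrite Rmult_assoc, Rinv_l, Rmult_1_r by nra. nra.
Qed.

(* Integrating the [s]-derivative of the kernel over (0, oo): the boundary terms vanish. *)
Lemma gig_integral_recurrence g r t : 0 < r -> 0 < t ->
  (g + 1) * gig_integral g r t + r / 2 * gig_integral (g - 1) r t = / t * gig_integral (g + 1) r t.
Proof.
  intros Hr Ht.
  set (Q := fun s => ((g + 1) * gig_kernel (g + 1 - 1) r t s + r / 2 * gig_kernel (g + 1 - 1 - 1) r t s)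
                     + - / t * gig_kernel (g + 1) r t s).
  assert (HQ : is_int_0_inf Q (((g + 1) * gig_integral (g + 1 - 1) r t
                                + r / 2 * gig_integral (g + 1 - 1 - 1) r t)
                               + - / t * gig_integral (g + 1) r t)).
  { apply is_int_0_inf_lin; [apply is_int_0_inf_lin2 |]; apply is_int_gig_integral; auto. }
  assert (HQ0 : is_int_0_inf Q 0).
  { intros eps Heps. assert (He2 : 0 < eps / 2) by lra.
    destruct (gig_kernel_vanishes_at_0 (g + 1) r t Hr Ht _ He2) as [a0 [Ha0 K0]].
    destruct (gig_kernel_vanishes_at_inf (g + 1) r t Hr Ht _ He2) as [b0 [Hb0 Kb]].
    exists a0, b0. split; auto. intros a b Ha Hb Hab.
    assert (pr : Riemann_integrable Q a b).
    { apply RiemannInt_P10; [apply Riemann_integrable_lin2 |]; apply Riemann_integrable_gig_kernel; lra. }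
    exists pr. rewrite (RiemannInt_derivative (gig_kernel (g + 1) r t) Q a b pr); try lra.
    - generalize (K0 a Ha) (Kb b Hb) (gig_kernel_pos (g + 1) r t a) (gig_kernel_pos (g + 1) r t b); intros.
      rewrite Rminus_0_r. apply Rabs_def1; lra.
    - intros x Hx. eapply dlim_val; [| apply derivable_gig_kernel_s; lra]. unfold Q. ring.
    - intros x Hx. apply derivable_continuous_pt. eexists. unfold Q.
      apply dlim_add; [apply dlim_add |]; apply dlim_scal, derivable_gig_kernel_s; lra. }
  assert (E := is_int_0_inf_unique _ _ _ HQ HQ0).
  replace (g + 1 - 1) with g in E by ring. lra.
Qed.

(** * Radial functions on R^n *)

Definition sqnorm (n : nat) (y : nat -> R) : R := fsum n (fun i => y i ^ 2).

Lemma fsum_ext n f g : (forall i, (i < n)%nat -> f i = g i) -> fsum n f = fsum n g.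
Proof. induction n; simpl; intros; auto. rewrite IHn, H; auto. Qed.

Lemma fsum_lin n f g a b : fsum n (fun i => a * f i + b * g i) = a * fsum n f + b * fsum n g.
Proof. induction n; simpl; [ring | rewrite IHn; ring]. Qed.

Lemma fsum_const n c : fsum n (fun _ => c) = INR n * c.
Proof. induction n; cbn [fsum]; [simpl; ring | rewrite IHn, S_INR; ring]. Qed.

Lemma upd_eq y i h : upd y i h i = h.
Proof. unfold upd. destruct (Nat.eq_dec i i); [auto | lia]. Qed.

Lemma upd_neq y i j h : j <> i -> upd y i h j = y j.
Proof. intros. unfold upd. destruct (Nat.eq_dec j i); [lia | auto]. Qed.

Lemma sqnorm_ge0 n y : 0 <= sqnorm n y.
Proof. unfold sqnorm. induction n; cbn [fsum]; [lra | generalize (pow2_ge_0 (y n)); lra]. Qed.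

Lemma sqnorm_upd_ge n y i h : (n <= i)%nat -> sqnorm n (upd y i h) = sqnorm n y.
Proof. intros. apply fsum_ext. intros j Hj. rewrite upd_neq by lia. reflexivity. Qed.

Lemma sqnorm_upd n y i h : (i < n)%nat -> sqnorm n (upd y i h) = (sqnorm n y - y i ^ 2) + h ^ 2.
Proof.
  induction n as [|n IH]; intros Hi; [lia |]. unfold sqnorm in *. cbn [fsum].
  destruct (Nat.eq_dec i n) as [-> | Hne].
  - fold (sqnorm n (upd y n h)) (sqnorm n y). rewrite sqnorm_upd_ge, upd_eq by lia. ring.
  - rewrite IH, upd_neq by lia. ring.
Qed.

Lemma sqnorm_ge_coord n y i : (i < n)%nat -> y i ^ 2 <= sqnorm n y.
Proof.
  intros Hi. generalize (sqnorm_ge0 n (upd y i 0)). rewrite sqnorm_upd by auto.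
  replace (0 ^ 2) with 0 by ring. lra.
Qed.

Lemma sqnorm_pos n y : nonzero_vec n y -> 0 < sqnorm n y.
Proof.
  intros [i [Hi Hy]]. apply Rlt_le_trans with (y i ^ 2); [| apply sqnorm_ge_coord; auto].
  apply pow2_gt_0 || (simpl; rewrite Rmult_1_r; apply Rsqr_pos_lt); auto.
Qed.

Lemma sqnorm_upd_pos_near n y i : (i < n)%nat -> 0 < sqnorm n y ->
  exists d, 0 < d /\ forall h, Rabs (h - y i) < d -> 0 < sqnorm n (upd y i h).
Proof.
  intros Hi Hr. assert (Hc := sqnorm_ge_coord n y i Hi).
  destruct (Req_dec (y i) 0) as [E | E].
  - exists 1. split; [lra |]. intros h _. rewrite sqnorm_upd, E by auto.
    generalize (pow2_ge_0 h). rewrite E in Hc. replace (0 ^ 2) with 0 in * by ring. lra.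
  - exists (Rabs (y i)). split; [apply Rabs_pos_lt; auto |]. intros h Hh.
    rewrite sqnorm_upd by auto. assert (h <> 0).
    { intros ->. rewrite Rminus_0_l, Rabs_Ropp in Hh. lra. }
    assert (0 < h ^ 2) by (simpl; rewrite Rmult_1_r; apply Rsqr_pos_lt; auto). lra.
Qed.

Lemma pderiv_eq f i y l : partial_lim f i y l -> pderiv i f y = l.
Proof.
  intros H. apply (uniqueness_limite (fun h => f (upd y i h)) (y i)); auto.
  unfold pderiv. apply epsilon_spec. exists l; auto.
Qed.

Definition radial_on (n : nat) (g : (nat -> R) -> R) (F : R -> R) : Prop :=
  forall z, 0 < sqnorm n z -> g z = F (sqnorm n z).

Definition profile_derivs (D : nat -> R -> R) : Prop :=
  forall k r, 0 < r -> derivable_pt_lim (D k) r (D (S k) r).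

Lemma partial_lim_of_section n g y i phi l : (i < n)%nat -> 0 < sqnorm n y ->
  (forall h, 0 < sqnorm n (upd y i h) -> g (upd y i h) = phi h) ->
  derivable_pt_lim phi (y i) l -> partial_lim g i y l.
Proof.
  intros Hi Hy E Hphi. destruct (sqnorm_upd_pos_near n y i Hi Hy) as [d [Hd Hnear]].
  apply (dlim_local phi _ _ _ d Hd); auto.
  intros z Hz. symmetry. apply E, Hnear; auto.
Qed.

Lemma derivable_pt_lim_square_shift F c x l : derivable_pt_lim F (c + x ^ 2) l ->
  derivable_pt_lim (fun h => F (c + h ^ 2)) x (2 * x * l).
Proof.
  intros HF. eapply dlim_val; [| apply (dlim_comp (fun h => c + h ^ 2) F); eauto].
  2:{ eapply dlim_val; [| apply (dlim_add (fun _ => c) (fun h => h ^ 2));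
        [apply derivable_pt_lim_const | apply derivable_pt_lim_pow]]. reflexivity. }
  simpl. ring.
Qed.

Lemma partial_lim_radial n g F l y i : (i < n)%nat -> 0 < sqnorm n y -> radial_on n g F ->
  derivable_pt_lim F (sqnorm n y) l -> partial_lim g i y (2 * y i * l).
Proof.
  intros Hi Hy Hg HF.
  apply (partial_lim_of_section n g y i (fun h => F ((sqnorm n y - y i ^ 2) + h ^ 2))); auto.
  - intros h Hh. rewrite Hg, sqnorm_upd by auto. reflexivity.
  - apply derivable_pt_lim_square_shift. replace (sqnorm n y - y i ^ 2 + y i ^ 2) with (sqnorm n y)
      by ring. auto.
Qed.

Lemma partial_lim_coord_radial n g H l y i j : (i < n)%nat -> (j < n)%nat -> 0 < sqnorm n y ->
  (forall z, 0 < sqnorm n z -> g z = z i * H (sqnorm n z)) ->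
  derivable_pt_lim H (sqnorm n y) l ->
  partial_lim g j y ((if Nat.eq_dec j i then H (sqnorm n y) else 0) + y i * (2 * y j * l)).
Proof.
  intros Hi Hj Hy Hg HH.
  assert (HF : derivable_pt_lim (fun h => H ((sqnorm n y - y j ^ 2) + h ^ 2)) (y j) (2 * y j * l))
    by (apply derivable_pt_lim_square_shift;
        replace (sqnorm n y - y j ^ 2 + y j ^ 2) with (sqnorm n y) by ring; auto).
  destruct (Nat.eq_dec j i) as [E | Hne]; [subst j |].
  - apply (partial_lim_of_section n g y i (fun h => h * H ((sqnorm n y - y i ^ 2) + h ^ 2))); auto.
    + intros h Hh. rewrite Hg, sqnorm_upd, upd_eq by auto. reflexivity.
    + eapply dlim_val; [| apply (dlim_mul (fun h => h)); [apply derivable_pt_lim_id | apply HF]].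
      cbv beta. replace (sqnorm n y - y i ^ 2 + y i ^ 2) with (sqnorm n y) by ring. ring.
  - apply (partial_lim_of_section n g y j (fun h => y i * H ((sqnorm n y - y j ^ 2) + h ^ 2))); auto.
    + intros h Hh. rewrite Hg, sqnorm_upd, upd_neq by auto. reflexivity.
    + eapply dlim_val; [| apply dlim_scal, HF]. ring.
Qed.

Section RadialFunctions.

Variables (n : nat) (D : nat -> R -> R).
Hypothesis HD : profile_derivs D.

Lemma pderiv_radial g i z : radial_on n g (D 0) -> (i < n)%nat -> 0 < sqnorm n z ->
  pderiv i g z = z i * (2 * D 1 (sqnorm n z)).
Proof.
  intros Hg Hi Hz. rewrite (pderiv_eq _ _ _ _ (partial_lim_radial n g (D 0) _ z i Hi Hz Hg (HD 0%nat _ Hz))).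
  ring.
Qed.

Lemma has_partials_radial g : radial_on n g (D 0) -> has_partials n g.
Proof.
  intros Hg y i Hy Hi. assert (Hr := sqnorm_pos n y Hy).
  eexists. apply (partial_lim_radial n g (D 0%nat)); auto.
Qed.

Lemma partial_lim_pderiv_radial g i j y : radial_on n g (D 0) -> (i < n)%nat -> (j < n)%nat ->
  0 < sqnorm n y ->
  partial_lim (pderiv i g) j y
    ((if Nat.eq_dec j i then 2 * D 1 (sqnorm n y) else 0) + y i * (2 * y j * (2 * D 2 (sqnorm n y)))).
Proof.
  intros Hg Hi Hj Hy. apply (partial_lim_coord_radial n _ (fun r => 2 * D 1 r)); auto.
  - intros z Hz. apply pderiv_radial; auto.
  - apply dlim_scal, HD; auto.
Qed.

Lemma has_partials_pderiv_radial g i : radial_on n g (D 0) -> (i < n)%nat ->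
  has_partials n (pderiv i g).
Proof.
  intros Hg Hi y j Hy Hj. eexists. apply partial_lim_pderiv_radial; auto. apply sqnorm_pos; auto.
Qed.

Lemma laplacian_radial g y : radial_on n g (D 0) -> 0 < sqnorm n y ->
  laplacian n g y = INR n * (2 * D 1 (sqnorm n y)) + 4 * sqnorm n y * D 2 (sqnorm n y).
Proof.
  intros Hg Hy. unfold laplacian.
  rewrite (fsum_ext n _ (fun i => 2 * D 1 (sqnorm n y) * 1 + 4 * D 2 (sqnorm n y) * y i ^ 2)).
  - rewrite fsum_lin, fsum_const. unfold sqnorm. ring.
  - intros i Hi. rewrite (pderiv_eq _ _ _ _ (partial_lim_pderiv_radial g i i y Hg Hi Hi Hy)).
    destruct (Nat.eq_dec i i); [ring | lia].
Qed.

(* The [k]-th derivative of [r |-> 2 r D 1 r], the profile of [x . grad g]. *)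
Definition x_grad_profile (k : nat) (r : R) : R := 2 * INR k * D k r + 2 * r * D (S k) r.

Lemma profile_derivs_x_grad : profile_derivs x_grad_profile.
Proof.
  intros k r Hr. unfold x_grad_profile.
  eapply dlim_val.
  2:{ apply dlim_add; [apply dlim_scal, HD; auto |].
      apply (dlim_mul (fun r => 2 * r)); [apply dlim_scal, derivable_pt_lim_id | apply HD; auto]. }
  rewrite S_INR. ring.
Qed.

Lemma radial_on_x_grad g : radial_on n g (D 0) -> radial_on n (x_grad n g) (x_grad_profile 0).
Proof.
  intros Hg z Hz. unfold x_grad, x_grad_profile.
  rewrite (fsum_ext n _ (fun i => 2 * D 1 (sqnorm n z) * z i ^ 2 + 0 * z i ^ 2)).
  - rewrite fsum_lin. unfold sqnorm. simpl INR. ring.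
  - intros i Hi. rewrite pderiv_radial by auto. ring.
Qed.

End RadialFunctions.

(** * The density of I^n_mu *)

Definition dens_exponent (n : nat) (mu : R) : R := mu - 1 - INR n / 2.

Definition dens_const (n : nat) (mu t : R) : R :=
  / Rpower (2 * PI) (INR n / 2) * / Gamma mu * Rpower t (- mu).

Definition dens_profile (n : nat) (mu t : R) (k : nat) (r : R) : R :=
  dens_const n mu t * (- / 2) ^ k * gig_integral (dens_exponent n mu - INR k) r t.

Lemma fprod_gaussian n x s : 0 < s ->
  fprod n (fun i => exp (- (x i) ^ 2 / (2 * s)) / sqrt (2 * PI * s)) =
  exp (- sqnorm n x / (2 * s)) * / sqrt (2 * PI * s) ^ n.
Proof.
  intros Hs. assert (0 < sqrt (2 * PI * s)) by (apply sqrt_lt_R0; generalize PI_RGT_0; nra).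
  induction n as [|n IH]; unfold sqnorm in *; cbn [fprod fsum].
  - replace (- 0 / (2 * s)) with 0 by (field; lra). rewrite exp_0. simpl. field.
  - rewrite IH. replace (- (fsum n (fun i => x i ^ 2) + x n ^ 2) / (2 * s))
      with (- fsum n (fun i => x i ^ 2) / (2 * s) + - x n ^ 2 / (2 * s)) by (field; lra).
    rewrite exp_plus. simpl pow.
    assert (sqrt (2 * PI * s) ^ n <> 0) by (apply pow_nonzero; lra). field. split; lra.
Qed.

Lemma sqrt_pow_Rpower y n : 0 < y -> sqrt y ^ n = Rpower y (INR n / 2).
Proof.
  intros. rewrite <- Rpower_sqrt, <- Rpower_pow by (auto; apply Rpower_pos).
  rewrite Rpower_mult. f_equal. field.
Qed.

Lemma integrand_eq n mu x t s : 0 < s ->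
  integrand n mu x t s = dens_const n mu t * gig_kernel (dens_exponent n mu) (sqnorm n x) t s.
Proof.
  intros Hs. unfold integrand. rewrite fprod_gaussian by auto.
  assert (HP : 0 < 2 * PI) by (generalize PI_RGT_0; lra).
  rewrite sqrt_pow_Rpower, <- Rpower_mult_distr by nra.
  unfold dens_const, gig_kernel, dens_exponent. unfold Rminus.
  rewrite (Rpower_plus (mu + - (1))), !Rpower_Ropp.
  unfold Rdiv. rewrite !Rinv_mult. ring.
Qed.

Lemma is_int_integrand n mu x t : 0 < sqnorm n x -> 0 < t ->
  is_int_0_inf (integrand n mu x t)
    (dens_const n mu t * gig_integral (dens_exponent n mu) (sqnorm n x) t).
Proof.
  intros Hr Ht.
  apply (is_int_0_inf_ext (fun s => dens_const n mu t * gig_kernel (dens_exponent n mu) (sqnorm n x) t s)).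
  - intros; rewrite integrand_eq; auto.
  - apply is_int_0_inf_scal, is_int_gig_integral; auto.
Qed.

Lemma dens_eq n mu x t : 0 < sqnorm n x -> 0 < t ->
  dens n mu x t = dens_const n mu t * gig_integral (dens_exponent n mu) (sqnorm n x) t.
Proof. intros. apply int_0_inf_eq, is_int_integrand; auto. Qed.

Lemma radial_on_dens n mu t : 0 < t ->
  radial_on n (fun y => dens n mu y t) (dens_profile n mu t 0).
Proof.
  intros Ht z Hz. rewrite dens_eq by auto. unfold dens_profile. simpl.
  rewrite Rminus_0_r. ring.
Qed.

Lemma profile_derivs_dens n mu t : 0 < t -> profile_derivs (dens_profile n mu t).
Proof.
  intros Ht k r Hr. unfold dens_profile.
  rewrite S_INR. replace (dens_exponent n mu - (INR k + 1)) with (dens_exponent n mu - INR k - 1)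
    by ring.
  eapply dlim_val; [| apply dlim_scal, derivable_gig_integral_r; auto]. simpl. ring.
Qed.

Lemma derivable_dens_t n mu x t : 0 < sqnorm n x -> 0 < t ->
  derivable_pt_lim (fun s => dens n mu x s) t
    (dens_const n mu t * (- mu / t * gig_integral (dens_exponent n mu) (sqnorm n x) t
                          + / t * / t * gig_integral (dens_exponent n mu + 1) (sqnorm n x) t)).
Proof.
  intros Hr Ht.
  set (K := / Rpower (2 * PI) (INR n / 2) * / Gamma mu).
  apply (dlim_local (fun s => K * Rpower s (- mu) * gig_integral (dens_exponent n mu) (sqnorm n x) s)
           _ t _ t Ht).
  { intros s Hs. apply Rabs_def2 in Hs. rewrite dens_eq by lra. reflexivity. }
  eapply dlim_val.
  2:{ apply (dlim_mul (fun s => K * Rpower s (- mu))).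
      - apply dlim_scal, derivable_pt_lim_power; auto.
      - apply derivable_gig_integral_t; auto. }
  unfold dens_const. fold K. rewrite Rpower_minus_1 by auto. field. lra.
Qed.

(* The three-term recurrence eliminates every [gig_integral] except the two lowest. *)
Lemma dens_heat_identity n mu t r : 0 < r -> 0 < t ->
  4 * (dens_const n mu t * (- mu / t * gig_integral (dens_exponent n mu) r t
                             + / t * / t * gig_integral (dens_exponent n mu + 1) r t))
  = (2 * mu - INR n) * (INR n * (2 * dens_profile n mu t 1 r) + 4 * r * dens_profile n mu t 2 r)
    - (INR n * (2 * x_grad_profile (dens_profile n mu t) 1 r)
       + 4 * r * x_grad_profile (dens_profile n mu t) 2 r).
Proof.
  intros Hr Ht. unfold x_grad_profile, dens_profile. simpl INR.
  set (b := dens_exponent n mu).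
  assert (E0 := gig_integral_recurrence b r t Hr Ht).
  assert (E1 := gig_integral_recurrence (b - 1) r t Hr Ht).
  assert (E2 := gig_integral_recurrence (b - 1 - 1) r t Hr Ht).
  replace (b - 1 + 1) with b in E1 by ring.
  replace (b - 1 - 1 + 1) with (b - 1) in E2 by ring.
  replace (b - (1 + 1)) with (b - 1 - 1) by ring.
  replace (b - (1 + 1 + 1)) with (b - 1 - 1 - 1) by ring.
  assert (F0 : gig_integral (b + 1) r t = t * ((b + 1) * gig_integral b r t
                                              + r / 2 * gig_integral (b - 1) r t))
    by (rewrite E0; field; lra).
  assert (F1 : gig_integral b r t = t * (b * gig_integral (b - 1) r t
                                         + r / 2 * gig_integral (b - 1 - 1) r t))
    by (rewrite E1; field; lra).
  assert (F2 : gig_integral (b - 1) r t = t * ((b - 1) * gig_integral (b - 1 - 1) r t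
                                               + r / 2 * gig_integral (b - 1 - 1 - 1) r t))
    by (rewrite E2; field; lra).
  rewrite F0, F1, F2. unfold b, dens_exponent. field. lra.
Qed.

Theorem mainTheorem14 (n : nat) (mu : R) (hn : (1 <= n)%nat) (hmu : 0 < mu) :
  forall t, 0 < t ->
    let f := fun y => dens n mu y t in
    (forall x, nonzero_vec n x -> is_int_0_inf (integrand n mu x t) (f x)) /\
    has_partials n f /\
    (forall i, (i < n)%nat -> has_partials n (pderiv i f)) /\
    has_partials n (x_grad n f) /\
    (forall i, (i < n)%nat -> has_partials n (pderiv i (x_grad n f))) /\
    forall x, nonzero_vec n x ->
      exists qt, derivable_pt_lim (fun s => dens n mu x s) t qt /\
        4 * qt = (2 * mu - INR n) * laplacian n f x - laplacian n (x_grad n f) x.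
Proof.
  intros t Ht f.
  set (D := dens_profile n mu t).
  assert (HD : profile_derivs D) by (apply profile_derivs_dens; auto).
  assert (Hf : radial_on n f (D 0%nat)) by (apply radial_on_dens; auto).
  assert (HE : profile_derivs (x_grad_profile D)) by (apply profile_derivs_x_grad; auto).
  assert (Hg : radial_on n (x_grad n f) (x_grad_profile D 0%nat))
    by (apply radial_on_x_grad; auto).
  split; [| split; [| split; [| split; [| split]]]].
  - intros x Hx. unfold f. rewrite dens_eq by (auto; apply sqnorm_pos; auto).
    apply is_int_integrand; auto. apply sqnorm_pos; auto.
  - apply (has_partials_radial n D HD f Hf).
  - intros i Hi. apply (has_partials_pderiv_radial n D HD f i Hf Hi).
  - apply (has_partials_radial n _ HE _ Hg).
  - intros i Hi. apply (has_partials_pderiv_radial n _ HE _ i Hg Hi).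
  - intros x Hx. assert (Hr := sqnorm_pos n x Hx).
    eexists. split; [apply derivable_dens_t; auto |].
    rewrite (laplacian_radial n D HD f x Hf Hr), (laplacian_radial n _ HE _ x Hg Hr).
    apply dens_heat_identity; auto.
Qed.
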